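(* For positive integers $N$ and $M\le N$, for $n\in\{1,\dots,M-1\}$ and $l\in\{1,\dots,M-1-n\}$ let $$c_M(n,l;t)=\prod_{j=1}^n\left|\frac{(1-t^{M-l-j})(1-t^{l+j})}{1-t^j}\right|.$$ For each $M$ let $(n_M,l_M)$ be a pair in this range at which $c_M(n,l;e^{\frac{2\pi i}{N+1/2}})$ attains its maximum. Assume $\frac{M}{N+\frac12}\to s\in[0,1]$, $\frac{n_M}{N+\frac12}\to n_s$ and $\frac{l_M}{N+\frac12}\to l_s$ as $N\to\infty$. Then $$\lim_{N\to\infty}\frac{1}{N+\frac12}\log c_M\big(n_M,l_M;e^{\frac{2\pi i}{N+1/2}}\big)\le\frac{\mathrm{Vol}(\mathbb{S}^3\setminus WL)}{2\pi},$$ with equality if and only if $s=1$, $n_s=\tfrac12$ and $l_s=\tfrac14$.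
   Context: $WL$ denotes the Whitehead link; $\mathrm{Vol}(\mathbb{S}^3\setminus WL)=v_8=8\Lambda(\pi/4)$ is its hyperbolic volume, where $\Lambda(\theta)=-\int_0^\theta\log|2\sin t|\,dt$ is the Lobachevsky function and $v_8$ is the volume of the regular ideal octahedron. *)

From Stdlib Require Import Reals.
From Coquelicot Require Import Coquelicot.
Open Scope R_scope.

Fixpoint prod1 (f : nat -> R) (n : nat) : R :=
  match n with
  | O => 1
  | S k => prod1 f k * f (S k)
  end.

Definition expi (theta : R) : C := (cos theta, sin theta).

Definition cM (M n l : nat) (t : C) : R :=
  prod1 (fun j => Cmod (((1 - Cpow t (M - l - j)) * (1 - Cpow t (l + j)))
                        / (1 - Cpow t j))%C) n.

Definition Lob (theta : R) : R :=
  - RInt_gen (fun x => ln (Rabs (2 * sin x))) (at_right 0) (at_point theta).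

(* volume of the regular ideal octahedron = Vol(S^3 \ Whitehead link) *)
Definition v8 : R := 8 * Lob (PI / 4).

Definition tN (N : nat) : C := expi (2 * PI / (INR N + / 2)).

(* With δ = π/(N+1/2) and t = e^{2iδ} one has |1 - t^k| = 2 sin(kδ), so log c_M(n,l;t) is a signed
   combination of five partial sums Σ_{k≤m} log(2 sin kδ).  Times δ, each is a Riemann sum for
   ∫_0^{mδ} log(2 sin x) dx = -Λ(mδ); the error is at most δ times the total variation of the
   unimodal integrand plus the contribution of the integrable singularity at 0, so it vanishes.
   The limit is V(A,B,C)/π with A = π(s - l_s - n_s), B = π l_s, C = π n_s and
   V = Λ(A) - Λ(A+C) + Λ(B) - Λ(B+C) + Λ(C).  Since Λ(π - x) = -Λ(x), for fixed C the increment
   Λ(A) - Λ(A+C) is maximal exactly at A = (π-C)/2, where it is 2Λ((π-C)/2), and 4Λ((π-C)/2) + Λ(C)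
   is maximal exactly at C = π/2, where it is 4Λ(π/4) = v_8/2 because Λ(π/2) = 0. *)

From Stdlib Require Import Reals Lra Lia.
From Coquelicot Require Import Coquelicot.
Open Scope R_scope.

Lemma MVT_is_derive (f f' : R -> R) (a b : R) : a < b ->
  (forall x, a < x < b -> is_derive f x (f' x)) ->
  (forall x, a <= x <= b -> continuity_pt f x) ->
  exists c, a < c < b /\ f b - f a = f' c * (b - a).
Proof.
  intros Hab Hd Hc.
  assert (pr : forall c, a < c < b -> derivable_pt f c).
  { intros c Hc'. exists (f' c). apply is_derive_Reals, Hd, Hc'. }
  destruct (MVT f id a b pr (fun c _ => derivable_pt_id c) Hab Hc
              (fun c _ => derivable_continuous_pt _ _ (derivable_pt_id c))) as [c [Pc HP]].
  exists c. split; [exact Pc|].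
  rewrite (derive_pt_eq_0 f c (f' c) (pr c Pc)) in HP by (apply is_derive_Reals, Hd, Pc).
  rewrite (derive_pt_eq_0 id c 1 _ (derivable_pt_lim_id c)) in HP.
  unfold id in HP. lra.
Qed.

Lemma strict_incr_of_derive_pos (f f' : R -> R) (a b : R) : a < b ->
  (forall x, a < x < b -> is_derive f x (f' x)) ->
  (forall x, a <= x <= b -> continuity_pt f x) ->
  (forall x, a < x < b -> 0 < f' x) -> f a < f b.
Proof.
  intros Hab Hd Hc Hp. destruct (MVT_is_derive f f' a b Hab Hd Hc) as [c [Hc1 Hc2]].
  specialize (Hp c Hc1). nra.
Qed.

Lemma strict_decr_of_derive_neg (f f' : R -> R) (a b : R) : a < b ->
  (forall x, a < x < b -> is_derive f x (f' x)) ->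
  (forall x, a <= x <= b -> continuity_pt f x) ->
  (forall x, a < x < b -> f' x < 0) -> f b < f a.
Proof.
  intros Hab Hd Hc Hn. destruct (MVT_is_derive f f' a b Hab Hd Hc) as [c [Hc1 Hc2]].
  specialize (Hn c Hc1). nra.
Qed.

Lemma const_of_derive_0 (f f' : R -> R) (a b : R) : a <= b ->
  (forall x, a < x < b -> is_derive f x (f' x)) ->
  (forall x, a <= x <= b -> continuity_pt f x) ->
  (forall x, a < x < b -> f' x = 0) -> f a = f b.
Proof.
  intros Hab Hd Hc H0. destruct (Rle_lt_or_eq_dec a b Hab) as [Hlt|<-]; [|reflexivity].
  destruct (MVT_is_derive f f' a b Hlt Hd Hc) as [c [Hc1 Hc2]].
  rewrite (H0 c Hc1) in Hc2. lra.
Qed.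

Lemma xlnx_ge (x : R) : 0 < x -> -2 * sqrt x <= x * ln x.
Proof.
  intros Hx. set (u := sqrt x).
  assert (Hu : 0 < u) by (apply sqrt_lt_R0; lra).
  assert (Hxu : x = u * u) by (unfold u; rewrite sqrt_sqrt; lra).
  assert (Hlnu : 1 - / u <= ln u).
  { pose proof (exp_ineq1_le (- ln u)) as H. rewrite exp_Ropp, exp_ln in H; lra. }
  assert (u * (1 - / u) = u - 1) by (field; lra).
  rewrite Hxu, ln_mult by lra. nra.
Qed.

(** * A primitive of [log (2 sin x)] on [[0, π]] *)

Definition sinc (t : R) : R := if Req_dec_T t 0 then 1 else sin t / t.

Lemma sinc_neq0 (t : R) : t <> 0 -> sinc t = sin t / t.
Proof. intros H. unfold sinc. now destruct (Req_dec_T t 0). Qed.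

Lemma sinc_0 : sinc 0 = 1.
Proof. unfold sinc. now destruct (Req_dec_T 0 0). Qed.

Lemma continuity_sinc (t : R) : continuity_pt sinc t.
Proof.
  destruct (Req_dec t 0) as [->|Ht].
  - intros eps Heps. destruct (derivable_pt_lim_sin 0 eps Heps) as [d Hd].
    exists d. split; [apply cond_pos|]. intros y [[_ Hy0] Hy]. simpl in *. unfold R_dist in *.
    rewrite sinc_0, sinc_neq0 by auto. rewrite Rminus_0_r in Hy.
    specialize (Hd y (not_eq_sym Hy0) Hy).
    now rewrite Rplus_0_l, sin_0, cos_0, Rminus_0_r in Hd.
  - apply (continuity_pt_locally_ext (fun t => sin t / t) sinc (Rabs t)).
    + now apply Rabs_pos_lt.
    + intros y Hy. symmetry. apply sinc_neq0. intros ->.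
      unfold Rdist in Hy. rewrite Rminus_0_l, Rabs_Ropp in Hy. lra.
    + apply continuity_pt_div; [reg|reg|exact Ht].
Qed.

(* [sin t / (t (π - t))], extended continuously to [0] and [π] through
   [1 / (t (π - t)) = (1 / t + 1 / (π - t)) / π]. *)
Definition sin_ratio (t : R) : R := (sinc t + sinc (PI - t)) / PI.

Lemma sin_ratio_eq (t : R) : t <> 0 -> t <> PI -> sin_ratio t = sin t / (t * (PI - t)).
Proof.
  intros H0 HP. pose proof PI_RGT_0. unfold sin_ratio.
  rewrite !sinc_neq0, sin_PI_x by lra. field. lra.
Qed.

Lemma sin_ratio_pos (t : R) : - PI < t < 2 * PI -> 0 < sin_ratio t.
Proof.
  intros Ht. pose proof PI_RGT_0.
  destruct (Req_dec t 0) as [->|H0].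
  { unfold sin_ratio. rewrite sinc_0, Rminus_0_r, sinc_neq0, sin_PI by lra.
    apply Rdiv_lt_0_compat; lra. }
  destruct (Req_dec t PI) as [->|HP].
  { unfold sin_ratio. rewrite Rminus_diag, sinc_0, sinc_neq0, sin_PI by lra.
    apply Rdiv_lt_0_compat; lra. }
  rewrite sin_ratio_eq by assumption.
  destruct (Rlt_or_le t 0) as [Hn|Hn]; [|destruct (Rlt_or_le t PI) as [Hp|Hp]].
  - pose proof (sin_lt_0_var t ltac:(lra) Hn).
    replace (sin t / (t * (PI - t))) with ((- sin t) / (- t * (PI - t))) by (field; lra).
    apply Rdiv_lt_0_compat; nra.
  - pose proof (sin_gt_0 t ltac:(lra) Hp). apply Rdiv_lt_0_compat; nra.
  - pose proof (sin_lt_0 t ltac:(lra) ltac:(lra)).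
    replace (sin t / (t * (PI - t))) with ((- sin t) / (t * (t - PI))) by (field; lra).
    apply Rdiv_lt_0_compat; nra.
Qed.

Lemma continuity_ln_sin_ratio (t : R) : - PI < t < 2 * PI ->
  continuity_pt (fun t => ln (sin_ratio t)) t.
Proof.
  intros Ht. pose proof PI_RGT_0. apply (continuity_pt_comp sin_ratio ln).
  - apply continuity_pt_div; [apply continuity_pt_plus|now apply continuity_pt_const|lra].
    + apply continuity_sinc.
    + apply (continuity_pt_comp (fun t => PI - t) sinc); [|apply continuity_sinc].
      reg.
  - apply derivable_continuous_pt. exists (/ sin_ratio t).
    apply derivable_pt_lim_ln, sin_ratio_pos, Ht.
Qed.

Lemma is_derive_RInt_ln_sin_ratio (x : R) : - PI < x < 2 * PI ->
  is_derive (fun x => RInt (fun t => ln (sin_ratio t)) 0 x) x (ln (sin_ratio x)).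
Proof.
  intros Hx. pose proof PI_RGT_0. auto_derive; [|ring].
  repeat split.
  - change (ex_RInt (fun t => ln (sin_ratio t)) 0 x).
    apply (ex_RInt_continuous (V := R_CompleteNormedModule)). intros z Hz.
    apply continuity_pt_filterlim, continuity_ln_sin_ratio.
    revert Hz. unfold Rmin, Rmax. destruct (Rle_dec 0 x); lra.
  - apply (locally_interval _ x (- PI) (2 * PI)); try (simpl; lra).
    intros y Hy1 Hy2. apply continuity_ln_sin_ratio. simpl in *. lra.
Qed.

Definition log2sin (x : R) : R := ln (2 * sin x).

Definition xlogx_minus_x (y : R) : R := y * ln y - y.

Lemma continuity_xlogx_minus_x (y : R) : 0 <= y -> continuity_pt xlogx_minus_x y.
Proof.
  intros Hy. destruct (Rle_lt_or_eq_dec 0 y Hy) as [Hp|<-].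
  - apply derivable_continuous_pt. exists (ln y). apply is_derive_Reals.
    unfold xlogx_minus_x. auto_derive; [lra|field; lra].
  - intros eps He.
    exists (Rmin 1 (Rsqr (eps / 3))).
    split; [apply Rmin_pos; [lra|apply Rsqr_pos_lt; lra]|].
    intros z [_ Hz]. simpl in *. unfold R_dist in *. rewrite Rminus_0_r in Hz.
    assert (Hz1 := Rlt_le_trans _ _ _ Hz (Rmin_l _ _)).
    assert (Hz2 := Rlt_le_trans _ _ _ Hz (Rmin_r _ _)). unfold Rsqr in Hz2.
    assert (Hz3 : Rabs z < eps / 3) by (destruct (Rle_lt_dec (eps / 3) 1); nra).
    unfold xlogx_minus_x. rewrite Rmult_0_l, !Rminus_0_r.
    destruct (Rle_lt_dec z 0) as [Hn|Hp].
    + assert (Hln : ln z = 0) by (unfold ln; case Rlt_dec; [intros; exfalso; lra|now intros]).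
      rewrite Hln, Rmult_0_r, Rminus_0_l, Rabs_Ropp. lra.
    + rewrite Rabs_right in Hz1, Hz2, Hz3 by lra.
      assert (Hs : sqrt z < eps / 3).
      { rewrite <- (sqrt_square (eps / 3)) by lra. apply sqrt_lt_1; lra. }
      assert (ln z <= 0) by (rewrite <- ln_1; apply ln_le; lra).
      pose proof (xlnx_ge z Hp). apply Rabs_def1; nra.
Qed.

(* [log (2 sin x) = log 2 + log x + log (π - x) + log (sin_ratio x)]: the first three
   terms have explicit primitives continuous up to [0] and [π], the last one is continuous. *)
Definition Lprim (x : R) : R :=
  x * ln 2 + xlogx_minus_x x - xlogx_minus_x (PI - x) + RInt (fun t => ln (sin_ratio t)) 0 x.

Lemma is_derive_Lprim (x : R) : 0 < x < PI -> is_derive Lprim x (log2sin x).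
Proof.
  intros Hx. pose proof PI_RGT_0.
  assert (HK := is_derive_RInt_ln_sin_ratio x ltac:(lra)).
  assert (Hr := sin_ratio_pos x ltac:(lra)).
  assert (E : log2sin x = ln 2 + ln x + ln (PI - x) + ln (sin_ratio x)).
  { unfold log2sin. rewrite sin_ratio_eq in * by lra.
    replace (2 * sin x) with (2 * x * (PI - x) * (sin x / (x * (PI - x)))) by (field; lra).
    rewrite !ln_mult by (try lra; repeat apply Rmult_lt_0_compat; lra). ring. }
  rewrite E. unfold Lprim, xlogx_minus_x.
  apply (is_derive_plus (fun x => x * ln 2 + (x * ln x - x) - ((PI - x) * ln (PI - x) - (PI - x))));
    [|exact HK].
  auto_derive; [lra|]. replace (PI + - x) with (PI - x) by ring. field. lra.
Qed.

Lemma continuity_Lprim (x : R) : 0 <= x <= PI -> continuity_pt Lprim x.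
Proof.
  intros Hx. pose proof PI_RGT_0. unfold Lprim.
  apply continuity_pt_plus; [apply continuity_pt_minus; [apply continuity_pt_plus|]|].
  - reg.
  - apply continuity_xlogx_minus_x; lra.
  - apply (continuity_pt_comp (fun t => PI - t) xlogx_minus_x); [|apply continuity_xlogx_minus_x; lra].
    reg.
  - apply derivable_continuous_pt. eexists. apply is_derive_Reals, is_derive_RInt_ln_sin_ratio. lra.
Qed.

Lemma is_derive_Lprim_comp (u : R -> R) (x du : R) :
  is_derive u x du -> 0 < u x < PI -> is_derive (fun t => Lprim (u t)) x (du * log2sin (u x)).
Proof. intros Hu Hx. exact (is_derive_comp Lprim u x _ du (is_derive_Lprim _ Hx) Hu). Qed.

Lemma continuity_Lprim_comp (u : R -> R) (x : R) :
  continuity_pt u x -> 0 <= u x <= PI -> continuity_pt (fun t => Lprim (u t)) x.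
Proof. intros Hu Hx. exact (continuity_pt_comp u Lprim x Hu (continuity_Lprim _ Hx)). Qed.

Lemma log2sin_PI_minus (x : R) : log2sin (PI - x) = log2sin x.
Proof. unfold log2sin. now rewrite sin_PI_x. Qed.

Lemma log2sin_double (t : R) : 0 < t < PI / 2 ->
  log2sin (2 * t) = log2sin t + log2sin (t + PI / 2).
Proof.
  intros Ht. unfold log2sin. rewrite sin_2a, sin_plus, sin_PI2, cos_PI2.
  assert (0 < sin t) by (apply sin_gt_0; lra).
  assert (0 < cos t) by (apply cos_gt_0; lra).
  rewrite <- ln_mult by lra. f_equal. ring.
Qed.

Lemma Lprim_PI : Lprim PI = Lprim 0.
Proof.
  pose proof PI_RGT_0.
  set (D := fun t => Lprim (2 * t) - 2 * Lprim t - 2 * Lprim (t + PI / 2)).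
  assert (HD : D 0 = D (PI / 2)).
  { apply (const_of_derive_0 D (fun _ => 0)); [lra| | |easy].
    - intros t Ht. unfold D.
      replace 0 with (2 * log2sin (2 * t) - 2 * (1 * log2sin t) - 2 * (1 * log2sin (t + PI / 2)))
        by (rewrite log2sin_double by lra; ring).
      apply (is_derive_minus (fun t => Lprim (2 * t) - 2 * Lprim t) (fun t => 2 * Lprim (t + PI / 2)));
        [apply (is_derive_minus (fun t => Lprim (2 * t)) (fun t => 2 * Lprim t))|];
        [| apply is_derive_scal..].
      + apply (is_derive_Lprim_comp (fun t => 2 * t) t 2); [auto_derive; auto; ring|lra].
      + apply (is_derive_Lprim_comp (fun t => t) t 1); [auto_derive; auto; ring|lra].
      + apply (is_derive_Lprim_comp (fun t => t + PI / 2) t 1); [auto_derive; auto; ring|lra].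
    - intros t Ht. unfold D.
      assert (Hc : forall u, continuity_pt u t -> 0 <= u t <= PI ->
                     continuity_pt (fun t => 2 * Lprim (u t)) t).
      { intros u Hu Hut. apply continuity_pt_mult; [now apply continuity_pt_const|].
        now apply continuity_Lprim_comp. }
      apply continuity_pt_minus; [apply continuity_pt_minus|].
      + apply continuity_Lprim_comp; [|lra]. reg.
      + apply (Hc (fun t => t)); [reg|lra].
      + apply (Hc (fun t => t + PI / 2)); [|lra]. reg. }
  unfold D in HD.
  replace (2 * 0) with 0 in HD by ring. replace (0 + PI / 2) with (PI / 2) in HD by ring.
  replace (2 * (PI / 2)) with PI in HD by field. replace (PI / 2 + PI / 2) with PI in HD by field.
  lra.
Qed.

Lemma Lprim_reflect (x : R) : 0 <= x <= PI -> Lprim x + Lprim (PI - x) = 2 * Lprim 0.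
Proof.
  intros Hx. pose proof PI_RGT_0.
  assert (H0x : Lprim 0 + Lprim (PI - 0) = Lprim x + Lprim (PI - x)).
  { apply (const_of_derive_0 (fun t => Lprim t + Lprim (PI - t)) (fun _ => 0)); [lra| | |easy].
    - intros t Ht.
      replace 0 with (1 * log2sin t + -1 * log2sin (PI - t)) by (rewrite log2sin_PI_minus; ring).
      apply (is_derive_plus (fun t => Lprim t) (fun t => Lprim (PI - t))).
      + apply (is_derive_Lprim_comp (fun t => t) t 1); [auto_derive; auto; ring|lra].
      + apply (is_derive_Lprim_comp (fun t => PI - t) t (-1)); [auto_derive; auto; ring|lra].
    - intros t Ht. apply continuity_pt_plus; apply continuity_Lprim_comp; try lra;
        reg. }
  rewrite Rminus_0_r, Lprim_PI in H0x. lra.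
Qed.

Lemma Lprim_PI2 : Lprim (PI / 2) = Lprim 0.
Proof.
  pose proof PI_RGT_0. pose proof (Lprim_reflect (PI / 2) ltac:(lra)) as Hr.
  replace (PI - PI / 2) with (PI / 2) in Hr by field. lra.
Qed.

Lemma Lob_Lprim (th : R) : 0 < th < PI -> Lob th = Lprim 0 - Lprim th.
Proof.
  intros Hth. pose proof PI_RGT_0. unfold Lob.
  replace (Lprim 0 - Lprim th) with (- (Lprim th - Lprim 0)) by ring. f_equal.
  apply (is_RInt_gen_unique (Fa := at_right 0) (Fb := at_point th)).
  intros P [eps Heps].
  destruct (proj1 (continuity_pt_locally Lprim 0) (continuity_Lprim 0 ltac:(lra)) eps) as [alp Hal].
  apply (Filter_prod _ _ _ (fun a => 0 < a < th /\ Rabs (Lprim a - Lprim 0) < eps) (fun b => b = th)).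
  - assert (Hm : 0 < Rmin alp th) by (apply Rmin_pos; [apply cond_pos|lra]).
    exists (mkposreal _ Hm). intros y Hy Hy0.
    assert (Hyalp := Rlt_le_trans _ _ _ Hy (Rmin_l _ _)).
    assert (Hyth := Rlt_le_trans _ _ _ Hy (Rmin_r _ _)).
    change (Rabs (y - 0) < th) in Hyth. rewrite Rminus_0_r, Rabs_right in Hyth by lra.
    split; [lra|]. now apply Hal.
  - reflexivity.
  - intros a b [Ha HLa] ->. exists (Lprim th - Lprim a). split.
    + apply (is_RInt_derive Lprim).
      * intros x Hx. rewrite Rmin_left, Rmax_right in Hx by lra.
        assert (Hs : 0 < sin x) by (apply sin_gt_0; lra).
        replace (ln (Rabs (2 * sin x))) with (log2sin x) by (unfold log2sin; rewrite Rabs_right; lra).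
        apply is_derive_Lprim. lra.
      * intros x Hx. rewrite Rmin_left, Rmax_right in Hx by lra.
        apply continuity_pt_filterlim.
        assert (Hs : 0 < sin x) by (apply sin_gt_0; lra).
        apply (continuity_pt_comp (fun x => Rabs (2 * sin x)) ln).
        -- apply (continuity_pt_comp (fun x => 2 * sin x) Rabs); [|apply Rcontinuity_abs].
           reg.
        -- apply derivable_continuous_pt. exists (/ Rabs (2 * sin x)).
           apply derivable_pt_lim_ln. rewrite Rabs_right; lra.
    + apply Heps. change (Rabs ((Lprim th - Lprim a) - (Lprim th - Lprim 0)) < eps).
      replace ((Lprim th - Lprim a) - (Lprim th - Lprim 0)) with (- (Lprim a - Lprim 0)) by ring.
      now rewrite Rabs_Ropp.
Qed.

(** * Riemann sums of [log (2 sin x)] *)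

Lemma log2sin_le_incr (x y : R) : 0 < x -> x <= y -> y <= PI / 2 -> log2sin x <= log2sin y.
Proof.
  intros. pose proof PI_RGT_0. unfold log2sin. apply ln_le.
  - pose proof (sin_gt_0 x ltac:(lra) ltac:(lra)). lra.
  - apply Rmult_le_compat_l; [lra|]. apply sin_incr_1; lra.
Qed.

Lemma log2sin_le_decr (x y : R) : PI / 2 <= x -> x <= y -> y < PI -> log2sin y <= log2sin x.
Proof.
  intros. pose proof PI_RGT_0. unfold log2sin. apply ln_le.
  - pose proof (sin_gt_0 y ltac:(lra) ltac:(lra)). lra.
  - apply Rmult_le_compat_l; [lra|]. apply sin_decr_1; lra.
Qed.

Lemma log2sin_le_ln2 (x : R) : 0 < x < PI -> log2sin x <= ln 2.
Proof.
  intros Hx. unfold log2sin. apply ln_le.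
  - pose proof (sin_gt_0 x ltac:(lra) ltac:(lra)). lra.
  - pose proof (SIN_bound x). lra.
Qed.

Lemma log2sin_PI2 : log2sin (PI / 2) = ln 2.
Proof. unfold log2sin. now rewrite sin_PI2, Rmult_1_r. Qed.

Lemma log2sin_ge_margin (u x : R) : 0 < u <= PI / 2 -> u <= x <= PI - u ->
  log2sin u <= log2sin x.
Proof.
  intros Hu Hx. destruct (Rle_dec x (PI / 2)).
  - apply log2sin_le_incr; lra.
  - rewrite <- (log2sin_PI_minus x). apply log2sin_le_incr; lra.
Qed.

(* Total variation of [log2sin] on [[x, y]]: it increases up to [π/2], then decreases. *)
Definition tvar_log2sin (x y : R) : R :=
  if Rle_dec y (PI / 2) then log2sin y - log2sin x
  else if Rle_dec (PI / 2) x then log2sin x - log2sin y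
  else 2 * ln 2 - log2sin x - log2sin y.

Lemma tvar_log2sin_ge (x c y : R) : 0 < x -> x <= c -> c <= y -> y < PI ->
  Rabs (log2sin y - log2sin c) <= tvar_log2sin x y.
Proof.
  intros. pose proof PI_RGT_0. apply Rabs_le. unfold tvar_log2sin.
  destruct (Rle_dec y (PI / 2)); [|destruct (Rle_dec (PI / 2) x)].
  - pose proof (log2sin_le_incr x c). pose proof (log2sin_le_incr c y). lra.
  - pose proof (log2sin_le_decr x c). pose proof (log2sin_le_decr c y). lra.
  - pose proof (log2sin_le_ln2 c). pose proof (log2sin_le_ln2 x). pose proof (log2sin_le_ln2 y).
    destruct (Rle_dec c (PI / 2)).
    + pose proof (log2sin_le_incr x c). lra.
    + pose proof (log2sin_le_decr c y). lra.
Qed.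

Lemma tvar_log2sin_le (x y : R) : 0 < x -> x <= y -> y < PI ->
  tvar_log2sin x y <= 2 * ln 2 - log2sin x - log2sin y.
Proof.
  intros. pose proof (log2sin_le_ln2 x). pose proof (log2sin_le_ln2 y).
  unfold tvar_log2sin. destruct (Rle_dec y (PI / 2)); [lra|]. destruct (Rle_dec (PI / 2) x); lra.
Qed.

Lemma tvar_log2sin_add (x y z : R) : x <= y <= z ->
  tvar_log2sin x y + tvar_log2sin y z = tvar_log2sin x z.
Proof.
  intros. pose proof log2sin_PI2. unfold tvar_log2sin.
  destruct (Rle_dec y (PI / 2)), (Rle_dec (PI / 2) x), (Rle_dec z (PI / 2)), (Rle_dec (PI / 2) y);
    try lra;
    first [ assert (Hy : y = PI / 2) by lra; assert (Hx : x = PI / 2) by lra; rewrite Hx, Hy; lra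
          | assert (Hy : y = PI / 2) by lra; rewrite Hy; lra
          | assert (Hx : x = PI / 2) by lra; rewrite Hx; lra
          | assert (Hz : z = PI / 2) by lra; rewrite Hz; lra ].
Qed.

Fixpoint sum1 (f : nat -> R) (n : nat) : R :=
  match n with
  | O => 0
  | S k => sum1 f k + f (S k)
  end.

Definition rsum (d : R) (m : nat) : R := sum1 (fun k => log2sin (INR k * d)) m.

(* By the mean value theorem [Lprim ((k+1) d) - Lprim (k d) = d log2sin c] with [c] in the step,
   so the k-th error term is at most [d] times the variation of [log2sin] over the step. *)
Lemma rsum_error (d : R) (m : nat) : 0 < d -> (1 <= m)%nat -> INR m * d < PI ->
  Rabs (d * (rsum d m - log2sin d) - (Lprim (INR m * d) - Lprim d))
    <= d * tvar_log2sin d (INR m * d).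
Proof.
  intros Hd. pose proof PI_RGT_0.
  induction m as [|k IH]; intros Hm Hlt; [lia|].
  destruct (Nat.eq_dec k 0) as [->|Hk].
  - unfold rsum. simpl sum1. simpl INR in *. rewrite Rmult_1_l in *.
    replace (d * (0 + log2sin d - log2sin d) - (Lprim d - Lprim d)) with 0 by ring.
    rewrite Rabs_R0. apply Rmult_le_pos; [lra|].
    eapply Rle_trans; [apply Rabs_pos|]. apply (tvar_log2sin_ge d d d); lra.
  - assert (Hki : 1 <= INR k) by (apply (le_INR 1 k); lia).
    rewrite S_INR in *.
    set (x := INR k * d) in *. set (y := (INR k + 1) * d) in *.
    assert (Hxd : d <= x) by (unfold x; nra).
    assert (Hyx : y = x + d) by (unfold x, y; ring).
    specialize (IH ltac:(lia) ltac:(unfold x in *; lra)).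
    destruct (MVT_is_derive Lprim log2sin x y ltac:(lra)) as [c [Hc Hstep]].
    { intros t Ht. apply is_derive_Lprim; lra. }
    { intros t Ht. apply continuity_Lprim; lra. }
    assert (E : d * (rsum d (S k) - log2sin d) - (Lprim y - Lprim d) =
                (d * (rsum d k - log2sin d) - (Lprim x - Lprim d)) + d * (log2sin y - log2sin c)).
    { unfold rsum. cbn [sum1]. rewrite S_INR. fold y. fold (rsum d k).
      replace (y - x) with d in Hstep by lra. lra. }
    rewrite E, <- (tvar_log2sin_add d x y) by lra.
    eapply Rle_trans; [apply Rabs_triang|]. rewrite Rmult_plus_distr_l.
    apply Rplus_le_compat; [exact IH|].
    rewrite Rabs_mult, Rabs_right by lra.
    apply Rmult_le_compat_l; [lra|]. apply tvar_log2sin_ge; lra.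
Qed.

Definition rsum_error_bound (d : R) : R :=
  d * (2 * ln 2 - 2 * log2sin (d / 2)) + Rabs (d * log2sin d - (Lprim d - Lprim 0)).

(* All nodes lie in [[d, π - d/2]], where [log2sin] is at least [log2sin (d/2)]. *)
Lemma rsum_error_le (d : R) (m : nat) : 0 < d <= 1 -> INR m * d <= PI - d / 2 ->
  Rabs (d * rsum d m - (Lprim (INR m * d) - Lprim 0)) <= rsum_error_bound d.
Proof.
  intros Hd Hm. pose proof PI_RGT_0. pose proof PI2_1. unfold rsum_error_bound.
  assert (Hg2 : log2sin (d / 2) <= ln 2) by (apply log2sin_le_ln2; lra).
  destruct m as [|k].
  - unfold rsum. simpl sum1. simpl INR. rewrite Rmult_0_l.
    replace (d * 0 - (Lprim 0 - Lprim 0)) with 0 by ring. rewrite Rabs_R0.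
    apply Rplus_le_le_0_compat; [apply Rmult_le_pos; lra|apply Rabs_pos].
  - assert (Hk : 1 <= INR (S k)) by (apply (le_INR 1 (S k)); lia).
    set (y := INR (S k) * d) in *.
    assert (Hy : d <= y) by (unfold y; nra).
    pose proof (rsum_error d (S k) ltac:(lra) ltac:(lia) ltac:(unfold y in *; lra)) as He.
    fold y in He.
    replace (d * rsum d (S k) - (Lprim y - Lprim 0)) with
      ((d * (rsum d (S k) - log2sin d) - (Lprim y - Lprim d)) + (d * log2sin d - (Lprim d - Lprim 0)))
      by ring.
    eapply Rle_trans; [apply Rabs_triang|]. apply Rplus_le_compat_r.
    eapply Rle_trans; [exact He|]. apply Rmult_le_compat_l; [lra|].
    eapply Rle_trans; [apply tvar_log2sin_le; lra|].
    pose proof (log2sin_ge_margin (d / 2) d ltac:(lra) ltac:(lra)).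
    pose proof (log2sin_ge_margin (d / 2) y ltac:(lra) ltac:(lra)). lra.
Qed.

(** * The limit of [log c_M] *)

Definition delta (N : nat) : R := PI / (INR N + / 2).

Definition ratio (u : nat -> nat) (N : nat) : R := INR (u N) / (INR N + / 2).

Lemma delta_pos (N : nat) : 0 < delta N.
Proof.
  unfold delta. pose proof PI_RGT_0. pose proof (pos_INR N).
  apply Rdiv_lt_0_compat; lra.
Qed.

Lemma delta_le_1 (N : nat) : (4 <= N)%nat -> delta N <= 1.
Proof.
  intros HN. unfold delta. pose proof PI_4.
  apply le_INR in HN. simpl in HN.
  apply (Rmult_le_reg_r (INR N + / 2)); [lra|].
  unfold Rdiv. rewrite Rmult_assoc, Rinv_l by lra. lra.
Qed.

Lemma INR_mul_delta (N : nat) : INR N * delta N = PI - delta N / 2.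
Proof. unfold delta. pose proof (pos_INR N). field. lra. Qed.

Lemma is_lim_div_INR_half (c : R) : is_lim_seq (fun N => c / (INR N + / 2)) 0.
Proof.
  replace (Finite 0) with (Rbar_mult c (Rbar_inv p_infty)) by (simpl; f_equal; ring).
  apply (is_lim_seq_scal_l (fun N => / (INR N + / 2))).
  apply is_lim_seq_inv; [|discriminate].
  apply (is_lim_seq_le_p_loc INR); [exists 0%nat; intros; lra|apply is_lim_seq_INR].
Qed.

Lemma ratio_nonneg (u : nat -> nat) (N : nat) : 0 <= ratio u N.
Proof.
  unfold ratio. pose proof (pos_INR (u N)). pose proof (pos_INR N).
  apply Rdiv_le_0_compat; lra.
Qed.

Lemma is_lim_ratio_nonneg (u : nat -> nat) (a : R) : is_lim_seq (ratio u) a -> 0 <= a.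
Proof.
  intros Ha. apply (is_lim_seq_le (fun _ => 0) (ratio u) 0 a);
    [apply ratio_nonneg|apply is_lim_seq_const|exact Ha].
Qed.

Lemma is_lim_ratio_le (u v : nat -> nat) (a b : R) :
  eventually (fun N => (u N <= v N)%nat) ->
  is_lim_seq (ratio u) a -> is_lim_seq (ratio v) b -> a <= b.
Proof.
  intros [N1 Huv] Ha Hb. apply (is_lim_seq_le_loc (ratio u) (ratio v) a b); [|exact Ha|exact Hb].
  exists N1. intros N HN. unfold ratio. pose proof (pos_INR N).
  apply Rmult_le_compat_r; [left; apply Rinv_0_lt_compat; lra|]. apply le_INR, Huv, HN.
Qed.

Lemma is_lim_ratio_add (u v : nat -> nat) (a b : R) :
  is_lim_seq (ratio u) a -> is_lim_seq (ratio v) b ->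
  is_lim_seq (ratio (fun N => u N + v N)%nat) (a + b).
Proof.
  intros Ha Hb. apply (is_lim_seq_ext (fun N => ratio u N + ratio v N)).
  - intros N. unfold ratio. rewrite plus_INR. field. pose proof (pos_INR N). lra.
  - now apply is_lim_seq_plus'.
Qed.

Lemma is_lim_ratio_sub1 (u v : nat -> nat) (a b : R) :
  eventually (fun N => (v N < u N)%nat) ->
  is_lim_seq (ratio u) a -> is_lim_seq (ratio v) b ->
  is_lim_seq (ratio (fun N => u N - v N - 1)%nat) (a - b).
Proof.
  intros [N1 Hvu] Ha Hb.
  apply (is_lim_seq_ext_loc (fun N => ratio u N - ratio v N - 1 / (INR N + / 2))).
  - exists N1. intros N HN. specialize (Hvu N HN). unfold ratio.
    rewrite !minus_INR by lia. simpl INR. field. pose proof (pos_INR N). lra.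
  - replace (a - b) with (a - b - 0) by ring.
    apply is_lim_seq_minus'; [now apply is_lim_seq_minus'|apply is_lim_div_INR_half].
Qed.

Lemma is_lim_xlog2sin (u : nat -> R) : is_lim_seq u 0 ->
  eventually (fun N => 0 < u N <= 1) -> is_lim_seq (fun N => u N * log2sin (u N)) 0.
Proof.
  intros Hu Hev. pose proof PI2_1.
  apply (is_lim_seq_le_le_loc (fun N => -2 * sqrt (u N)) _ (fun N => ln 2 * u N)).
  - revert Hev. apply filter_imp. intros N HuN. split.
    + eapply Rle_trans; [apply xlnx_ge; lra|]. apply Rmult_le_compat_l; [lra|].
      unfold log2sin. apply ln_le; [lra|].
      pose proof (pre_sin_bound (u N) 0 ltac:(lra) ltac:(lra)) as [Hs _].
      unfold sin_approx, sin_term in Hs. simpl in Hs. nra.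
    + rewrite (Rmult_comm (ln 2)). apply Rmult_le_compat_l; [lra|]. apply log2sin_le_ln2; lra.
  - replace (Finite 0) with (Rbar_mult (-2) (sqrt 0)) by (simpl; rewrite sqrt_0; f_equal; ring).
    apply (is_lim_seq_scal_l (fun N => sqrt (u N))), is_lim_seq_continuous; [|exact Hu].
    apply continuity_pt_sqrt. lra.
  - replace (Finite 0) with (Rbar_mult (ln 2) 0) by (simpl; f_equal; ring).
    now apply is_lim_seq_scal_l.
Qed.

Lemma is_lim_rsum_error_bound : is_lim_seq (fun N => rsum_error_bound (delta N)) 0.
Proof.
  pose proof PI_RGT_0.
  assert (Hd : is_lim_seq delta 0) by apply is_lim_div_INR_half.
  assert (Hev : forall c, 0 < c <= 1 -> eventually (fun N => 0 < c * delta N <= 1)).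
  { intros c Hc. exists 4%nat. intros N HN.
    pose proof (delta_pos N). pose proof (delta_le_1 N HN). nra. }
  assert (Hx : forall c, 0 < c <= 1 ->
            is_lim_seq (fun N => c * delta N * log2sin (c * delta N)) 0).
  { intros c Hc. apply is_lim_xlog2sin; [|now apply Hev].
    replace (Finite 0) with (Rbar_mult c 0) by (simpl; f_equal; ring).
    now apply is_lim_seq_scal_l. }
  assert (Hvar : is_lim_seq (fun N => delta N * (2 * ln 2 - 2 * log2sin (delta N / 2))) 0).
  { apply (is_lim_seq_ext
      (fun N => 2 * ln 2 * delta N - 4 * (/ 2 * delta N * log2sin (/ 2 * delta N)))).
    { intros N. unfold Rdiv. rewrite (Rmult_comm (delta N) (/ 2)). field. }
    replace (Finite 0) with (Finite (2 * ln 2 * 0 - 4 * 0)) by (f_equal; ring).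
    apply is_lim_seq_minus'; apply is_lim_seq_mult'; try apply is_lim_seq_const;
      [exact Hd|apply Hx; lra]. }
  assert (Hend : is_lim_seq (fun N => delta N * log2sin (delta N) - (Lprim (delta N) - Lprim 0)) 0).
  { assert (HF : is_lim_seq (fun N => Lprim (delta N) - Lprim 0) (Lprim 0 - Lprim 0)).
    { apply is_lim_seq_minus'; [|apply is_lim_seq_const].
      apply is_lim_seq_continuous; [apply continuity_Lprim; lra|exact Hd]. }
    assert (Hg : is_lim_seq (fun N => delta N * log2sin (delta N)) 0).
    { apply (is_lim_seq_ext (fun N => 1 * delta N * log2sin (1 * delta N))).
      { intros; now rewrite Rmult_1_l. }
      apply Hx; lra. }
    pose proof (is_lim_seq_minus' _ _ _ _ Hg HF) as Hlim.
    now rewrite Rminus_diag, Rminus_0_r in Hlim. }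
  unfold rsum_error_bound. replace (Finite 0) with (Finite (0 + 0)) by (f_equal; ring).
  apply is_lim_seq_plus'; [exact Hvar|]. now apply is_lim_seq_abs_0 in Hend.
Qed.

Lemma is_lim_rsum (b : nat -> nat) (beta : R) :
  eventually (fun N => (b N <= N)%nat) -> is_lim_seq (ratio b) beta ->
  is_lim_seq (fun N => delta N * rsum (delta N) (b N)) (Lprim (PI * beta) - Lprim 0).
Proof.
  intros Hb Hlim. pose proof PI_RGT_0.
  assert (Hbeta : 0 <= beta <= 1).
  { split; [exact (is_lim_ratio_nonneg b beta Hlim)|].
    apply (is_lim_ratio_le b (fun N => N) beta 1 Hb Hlim).
    assert (H1 := is_lim_seq_minus' _ _ 1 0 (is_lim_seq_const 1) (is_lim_div_INR_half (/ 2))).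
    rewrite Rminus_0_r in H1. revert H1. apply is_lim_seq_ext.
    intros N. unfold ratio. field. pose proof (pos_INR N). lra. }
  assert (Hx : is_lim_seq (fun N => INR (b N) * delta N) (PI * beta)).
  { apply (is_lim_seq_ext (fun N => PI * ratio b N)); [intros N; unfold ratio, delta, Rdiv; ring|].
    now apply (is_lim_seq_scal_l (ratio b) PI beta). }
  apply (is_lim_seq_ext
    (fun N => (delta N * rsum (delta N) (b N) - (Lprim (INR (b N) * delta N) - Lprim 0))
              + (Lprim (INR (b N) * delta N) - Lprim 0))); [intros; ring|].
  replace (Lprim (PI * beta) - Lprim 0) with (0 + (Lprim (PI * beta) - Lprim 0)) by ring.
  apply is_lim_seq_plus'.
  - apply (is_lim_seq_le_le_loc (fun N => - rsum_error_bound (delta N)) _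
                                 (fun N => rsum_error_bound (delta N))).
    + destruct Hb as [N1 Hb]. exists (max N1 4). intros N HN.
      apply Rabs_le_between, rsum_error_le.
      * split; [apply delta_pos|apply delta_le_1; lia].
      * rewrite <- INR_mul_delta. apply Rmult_le_compat_r; [left; apply delta_pos|].
        apply le_INR, Hb. lia.
    + replace (Finite 0) with (Rbar_opp 0) by (simpl; f_equal; ring).
      apply (is_lim_seq_opp (fun N => rsum_error_bound (delta N)) 0), is_lim_rsum_error_bound.
    + apply is_lim_rsum_error_bound.
  - apply is_lim_seq_minus'; [|apply is_lim_seq_const].
    apply is_lim_seq_continuous; [apply continuity_Lprim; nra|exact Hx].
Qed.

Lemma prod1_pos (f : nat -> R) (n : nat) :
  (forall j, (1 <= j <= n)%nat -> 0 < f j) -> 0 < prod1 f n.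
Proof.
  induction n as [|n IH]; intros Hf; simpl; [lra|].
  apply Rmult_lt_0_compat; [apply IH; intros; apply Hf; lia|apply Hf; lia].
Qed.

Lemma ln_prod1 (f : nat -> R) (n : nat) :
  (forall j, (1 <= j <= n)%nat -> 0 < f j) -> ln (prod1 f n) = sum1 (fun j => ln (f j)) n.
Proof.
  induction n as [|n IH]; intros Hf; simpl; [apply ln_1|].
  rewrite ln_mult, IH; [reflexivity|intros; apply Hf; lia| |apply Hf; lia].
  apply prod1_pos. intros. apply Hf. lia.
Qed.

Lemma sum1_ext (f g : nat -> R) (n : nat) :
  (forall j, (1 <= j <= n)%nat -> f j = g j) -> sum1 f n = sum1 g n.
Proof.
  induction n as [|n IH]; intros Hfg; simpl; [reflexivity|].
  rewrite IH, Hfg; [reflexivity|lia|intros; apply Hfg; lia].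
Qed.

Lemma sum1_reflect_shift (a : nat -> R) (m l n : nat) : (l + n <= m - 1)%nat ->
  sum1 (fun j => a (m - l - j)%nat + a (l + j)%nat - a j) n =
  (sum1 a (m - l - 1) - sum1 a (m - l - n - 1)) + (sum1 a (l + n) - sum1 a l) - sum1 a n.
Proof.
  induction n as [|n IH]; intros Hn.
  - rewrite Nat.sub_0_r, Nat.add_0_r. simpl. ring.
  - simpl sum1. rewrite IH by lia.
    replace (m - l - n - 1)%nat with (S (m - l - S n - 1)) by lia.
    replace (l + S n)%nat with (S (l + n)) by lia. simpl sum1.
    replace (S (m - l - S n - 1)) with (m - l - S n)%nat by lia. ring.
Qed.

Lemma Cpow_expi (th : R) (k : nat) : Cpow (expi th) k = expi (INR k * th).
Proof.
  induction k as [|k IH].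
  - unfold expi. simpl. now rewrite Rmult_0_l, cos_0, sin_0.
  - rewrite Cpow_S, IH, S_INR. unfold expi, Cmult. simpl.
    replace ((INR k + 1) * th) with (th + INR k * th) by ring.
    rewrite cos_plus, sin_plus. f_equal; ring.
Qed.

Lemma Cmod_1_minus_expi (th : R) : Cmod (1 - expi th) = 2 * Rabs (sin (th / 2)).
Proof.
  unfold Cmod, expi, Cminus, Cplus, Copp. simpl fst; simpl snd.
  replace ((1 + - cos th) ^ 2 + (0 + - sin th) ^ 2) with (Rsqr (2 * sin (th / 2))).
  - rewrite sqrt_Rsqr_abs, Rabs_mult, (Rabs_right 2) by lra. reflexivity.
  - replace th with (2 * (th / 2)) at 2 3 by field.
    rewrite cos_2a_sin, sin_2a. unfold Rsqr.
    pose proof (sin2_cos2 (th / 2)) as Hs. unfold Rsqr in Hs. nra.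
Qed.

Lemma Cmod_1_minus_tN_pow (N k : nat) : (1 <= k <= N)%nat ->
  0 < sin (INR k * delta N) /\ Cmod (1 - Cpow (tN N) k) = 2 * sin (INR k * delta N).
Proof.
  intros Hk. pose proof PI_RGT_0. pose proof (delta_pos N). pose proof (INR_mul_delta N).
  assert (Hk1 : 1 <= INR k) by (apply (le_INR 1); lia).
  assert (HkN : INR k <= INR N) by (apply le_INR; lia).
  assert (INR k * delta N <= INR N * delta N) by (apply Rmult_le_compat_r; lra).
  assert (Hs : 0 < sin (INR k * delta N)) by (apply sin_gt_0; [apply Rmult_lt_0_compat|]; lra).
  split; [exact Hs|].
  unfold tN. rewrite Cpow_expi, Cmod_1_minus_expi.
  replace (INR k * (2 * PI / (INR N + / 2)) / 2) with (INR k * delta N)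
    by (unfold delta; field; pose proof (pos_INR N); lra).
  rewrite Rabs_right; lra.
Qed.

Definition cM_factor (M l : nat) (t : C) (j : nat) : R :=
  Cmod (((1 - Cpow t (M - l - j)) * (1 - Cpow t (l + j))) / (1 - Cpow t j))%C.

Lemma ln_cM_factor (N M l j : nat) : (1 <= l)%nat -> (1 <= j)%nat -> (l + j <= M - 1)%nat ->
  (M <= N)%nat ->
  0 < cM_factor M l (tN N) j /\
  ln (cM_factor M l (tN N) j) =
  log2sin (INR (M - l - j) * delta N) + log2sin (INR (l + j) * delta N) - log2sin (INR j * delta N).
Proof.
  intros Hl Hj Hlj HM.
  destruct (Cmod_1_minus_tN_pow N (M - l - j)) as [Pa Ea]; [lia|].
  destruct (Cmod_1_minus_tN_pow N (l + j)) as [Pb Eb]; [lia|].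
  destruct (Cmod_1_minus_tN_pow N j) as [Pc Ec]; [lia|].
  unfold cM_factor, log2sin. rewrite Cmod_div, Cmod_mult, Ea, Eb, Ec.
  2:{ intros H0. rewrite H0, Cmod_0 in Ec. lra. }
  split.
  - apply Rdiv_lt_0_compat; [apply Rmult_lt_0_compat|]; lra.
  - unfold Rdiv. rewrite ln_mult, ln_mult, ln_Rinv; try lra.
    + apply Rmult_lt_0_compat; lra.
    + apply Rinv_0_lt_compat; lra.
Qed.

Lemma ln_cM (N M n l : nat) : (1 <= l)%nat -> (l + n <= M - 1)%nat -> (M <= N)%nat ->
  ln (cM M n l (tN N)) =
  (rsum (delta N) (M - l - 1) - rsum (delta N) (M - l - n - 1))
  + (rsum (delta N) (l + n) - rsum (delta N) l) - rsum (delta N) n.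
Proof.
  intros Hl Hn HM. change (cM M n l (tN N)) with (prod1 (cM_factor M l (tN N)) n).
  rewrite ln_prod1 by (intros j Hj; apply (ln_cM_factor N); lia).
  rewrite (sum1_ext _ _ n (fun j Hj => proj2 (ln_cM_factor N M l j Hl ltac:(lia) ltac:(lia) HM))).
  apply (sum1_reflect_shift (fun k => log2sin (INR k * delta N))). exact Hn.
Qed.

(* [Vfun A B C = Λ A - Λ (A + C) + Λ B - Λ (B + C) + Λ C] in terms of [Lob]. *)
Definition Vfun (A B C : R) : R :=
  (Lprim (A + C) - Lprim A) + (Lprim (B + C) - Lprim B) - (Lprim C - Lprim 0).

Lemma is_lim_ln_cM (M n l : nat -> nat) (s ns ls : R) :
  eventually (fun N => (1 <= l N)%nat /\ (l N + n N <= M N - 1)%nat /\ (M N <= N)%nat) ->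
  is_lim_seq (ratio M) s -> is_lim_seq (ratio n) ns -> is_lim_seq (ratio l) ls ->
  is_lim_seq (fun N => / (INR N + / 2) * ln (cM (M N) (n N) (l N) (tN N)))
    (Vfun (PI * (s - ls - ns)) (PI * ls) (PI * ns) / PI).
Proof.
  intros Hev HM Hn Hl. pose proof PI_RGT_0.
  assert (Hidx : forall P : nat -> Prop,
            (forall N, (1 <= l N)%nat -> (l N + n N <= M N - 1)%nat -> (M N <= N)%nat -> P N) ->
            eventually P).
  { intros P HP. revert Hev. apply filter_imp. intros N (H1 & H2 & H3). now apply HP. }
  assert (Hln := is_lim_ratio_add l n ls ns Hl Hn).
  apply (is_lim_seq_ext_loc (fun N => / PI *
    ((delta N * rsum (delta N) (M N - l N - 1) - delta N * rsum (delta N) (M N - (l N + n N) - 1))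
     + (delta N * rsum (delta N) (l N + n N) - delta N * rsum (delta N) (l N))
     - delta N * rsum (delta N) (n N)))).
  { apply Hidx. intros N Hl1 Hln1 HMN.
    rewrite ln_cM, Nat.sub_add_distr by lia. unfold delta. field. pose proof (pos_INR N). lra. }
  replace (Vfun (PI * (s - ls - ns)) (PI * ls) (PI * ns) / PI) with
    (/ PI * (((Lprim (PI * (s - ls)) - Lprim 0) - (Lprim (PI * (s - (ls + ns))) - Lprim 0))
             + ((Lprim (PI * (ls + ns)) - Lprim 0) - (Lprim (PI * ls) - Lprim 0))
             - (Lprim (PI * ns) - Lprim 0))).
  2:{ unfold Vfun. replace (PI * (s - ls - ns) + PI * ns) with (PI * (s - ls)) by ring.
      replace (PI * ls + PI * ns) with (PI * (ls + ns)) by ring.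
      replace (PI * (s - (ls + ns))) with (PI * (s - ls - ns)) by ring. field. lra. }
  apply is_lim_seq_mult'; [apply is_lim_seq_const|].
  apply is_lim_seq_minus'; [apply is_lim_seq_plus'; apply is_lim_seq_minus'|];
    apply is_lim_rsum; try (apply Hidx; intros; lia).
  - apply is_lim_ratio_sub1; [apply Hidx; intros; lia|exact HM|exact Hl].
  - apply is_lim_ratio_sub1; [apply Hidx; intros; lia|exact HM|exact Hln].
  - exact Hln.
  - exact Hl.
  - exact Hn.
Qed.

(** * Maximising the limit *)

Lemma log2sin_lt_shift (x C : R) : 0 < C -> 0 < x -> x + C / 2 < PI / 2 ->
  log2sin x < log2sin (x + C).
Proof.
  intros. pose proof PI_RGT_0. unfold log2sin. apply ln_increasing.
  - pose proof (sin_gt_0 x ltac:(lra) ltac:(lra)). lra.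
  - assert (0 < sin (x + C) - sin x); [|lra].
    rewrite form4. replace ((x + C + x) / 2) with (x + C / 2) by field.
    replace ((x + C - x) / 2) with (C / 2) by field.
    pose proof (cos_gt_0 (x + C / 2) ltac:(lra) ltac:(lra)).
    pose proof (sin_gt_0 (C / 2) ltac:(lra) ltac:(lra)). nra.
Qed.

Lemma log2sin_shift_lt (x C : R) : 0 < C -> 0 < x -> PI / 2 < x + C / 2 -> x + C < PI ->
  log2sin (x + C) < log2sin x.
Proof.
  intros. pose proof PI_RGT_0. unfold log2sin. apply ln_increasing.
  - pose proof (sin_gt_0 (x + C) ltac:(lra) ltac:(lra)). lra.
  - assert (sin (x + C) - sin x < 0); [|lra].
    rewrite form4. replace ((x + C + x) / 2) with (x + C / 2) by field.
    replace ((x + C - x) / 2) with (C / 2) by field.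
    pose proof (cos_lt_0 (x + C / 2) ltac:(lra) ltac:(lra)).
    pose proof (sin_gt_0 (C / 2) ltac:(lra) ltac:(lra)). nra.
Qed.

Lemma Lprim_increment_le (A C : R) : 0 <= C -> 0 <= A -> A + C <= PI ->
  Lprim (A + C) - Lprim A <= 2 * Lprim 0 - 2 * Lprim ((PI - C) / 2) /\
  (Lprim (A + C) - Lprim A = 2 * Lprim 0 - 2 * Lprim ((PI - C) / 2) ->
   C = 0 \/ A = (PI - C) / 2).
Proof.
  intros HC HA HAC. pose proof PI_RGT_0.
  set (m := (PI - C) / 2).
  assert (Hm : 2 * Lprim 0 - 2 * Lprim m = Lprim (m + C) - Lprim m).
  { pose proof (Lprim_reflect m ltac:(unfold m; lra)) as Hr.
    replace (PI - m) with (m + C) in Hr by (unfold m; field). lra. }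
  rewrite Hm.
  destruct (Req_dec C 0) as [->|HC0].
  { rewrite !Rplus_0_r. split; [lra|now left]. }
  set (psi := fun x => Lprim (x + C) - Lprim x).
  assert (Hd : forall x, 0 < x -> x + C < PI ->
             is_derive psi x (log2sin (x + C) - log2sin x)).
  { intros x Hx1 Hx2. unfold psi.
    replace (log2sin (x + C) - log2sin x) with (1 * log2sin (x + C) - 1 * log2sin x) by ring.
    apply (is_derive_minus (fun x => Lprim (x + C)) (fun x => Lprim x)).
    - apply (is_derive_Lprim_comp (fun x => x + C)); [auto_derive; auto; ring|lra].
    - apply (is_derive_Lprim_comp (fun x => x)); [auto_derive; auto; ring|lra]. }
  assert (Hc : forall x, 0 <= x -> x + C <= PI -> continuity_pt psi x).
  { intros x Hx1 Hx2. apply continuity_pt_minus; [|apply continuity_Lprim; lra].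
    apply (continuity_Lprim_comp (fun x => x + C)); [|lra].
    reg. }
  change (Lprim (A + C) - Lprim A) with (psi A). change (Lprim (m + C) - Lprim m) with (psi m).
  destruct (Rtotal_order A m) as [Hlt|[Heq|Hgt]].
  - assert (psi A < psi m); [|split; lra].
    apply (strict_incr_of_derive_pos psi (fun x => log2sin (x + C) - log2sin x) A m Hlt).
    + intros x Hx. apply Hd; unfold m in *; lra.
    + intros x Hx. apply Hc; unfold m in *; lra.
    + intros x Hx. unfold m in *.
      pose proof (log2sin_lt_shift x C ltac:(lra) ltac:(lra) ltac:(lra)). lra.
  - rewrite Heq. split; [lra|now right].
  - assert (psi A < psi m); [|split; lra].
    apply (strict_decr_of_derive_neg psi (fun x => log2sin (x + C) - log2sin x) m A Hgt).
    + intros x Hx. apply Hd; unfold m in *; lra.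
    + intros x Hx. apply Hc; unfold m in *; lra.
    + intros x Hx. unfold m in *.
      pose proof (log2sin_shift_lt x C ltac:(lra) ltac:(lra) ltac:(lra) ltac:(lra)). lra.
Qed.

Lemma log2sin_central_sign (C : R) : 0 < C < PI ->
  (C < PI / 2 -> 0 < 2 * log2sin ((PI - C) / 2) - log2sin C) /\
  (PI / 2 < C -> 2 * log2sin ((PI - C) / 2) - log2sin C < 0).
Proof.
  intros HC. pose proof PI_RGT_0.
  assert (Hs : 0 < sin (C / 2)) by (apply sin_gt_0; lra).
  assert (Hc : 0 < cos (C / 2)) by (apply cos_gt_0; lra).
  assert (E : 2 * log2sin ((PI - C) / 2) - log2sin C = ln (2 * cos (C / 2)) - ln (2 * sin (C / 2))).
  { assert (Hsin : sin C = 2 * sin (C / 2) * cos (C / 2)) by (rewrite <- sin_2a; f_equal; field).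
    unfold log2sin. replace ((PI - C) / 2) with (PI / 2 - C / 2) by field.
    rewrite sin_shift, Hsin.
    replace (2 * (2 * sin (C / 2) * cos (C / 2))) with (2 * sin (C / 2) * (2 * cos (C / 2))) by ring.
    rewrite (ln_mult (2 * sin (C / 2))) by lra. ring. }
  rewrite E. split; intros HCl.
  - assert (sin (C / 2) < cos (C / 2)) by (rewrite <- sin_shift; apply sin_increasing_1; lra).
    assert (ln (2 * sin (C / 2)) < ln (2 * cos (C / 2))) by (apply ln_increasing; lra).
    lra.
  - assert (cos (C / 2) < sin (C / 2)) by (rewrite <- sin_shift; apply sin_increasing_1; lra).
    assert (ln (2 * cos (C / 2)) < ln (2 * sin (C / 2))) by (apply ln_increasing; lra).
    lra.
Qed.

Lemma Lprim_central_le (C : R) : 0 <= C <= PI ->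
  - 4 * Lprim ((PI - C) / 2) - Lprim C <= - 4 * Lprim (PI / 4) - Lprim (PI / 2) /\
  (- 4 * Lprim ((PI - C) / 2) - Lprim C = - 4 * Lprim (PI / 4) - Lprim (PI / 2) -> C = PI / 2).
Proof.
  intros HC. pose proof PI_RGT_0.
  set (h := fun x => - 4 * Lprim ((PI - x) / 2) - Lprim x).
  set (dh := fun x => 2 * log2sin ((PI - x) / 2) - log2sin x).
  assert (Hd : forall x, 0 < x < PI -> is_derive h x (dh x)).
  { intros x Hx. unfold h, dh.
    replace (2 * log2sin ((PI - x) / 2) - log2sin x)
      with (- 4 * (- / 2 * log2sin ((PI - x) / 2)) - 1 * log2sin x) by field.
    apply (is_derive_minus (fun x => - 4 * Lprim ((PI - x) / 2)) (fun x => Lprim x));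
      [apply is_derive_scal|].
    - apply (is_derive_Lprim_comp (fun x => (PI - x) / 2)); [auto_derive; auto; field|lra].
    - apply (is_derive_Lprim_comp (fun x => x)); [auto_derive; auto; ring|lra]. }
  assert (Hc : forall x, 0 <= x <= PI -> continuity_pt h x).
  { intros x Hx. unfold h. apply continuity_pt_minus; [|apply continuity_Lprim; lra].
    apply continuity_pt_mult; [now apply continuity_pt_const|].
    apply (continuity_Lprim_comp (fun x => (PI - x) / 2)); [|lra].
    reg. }
  replace (- 4 * Lprim (PI / 4) - Lprim (PI / 2)) with (h (PI / 2))
    by (unfold h; do 3 f_equal; field).
  change (- 4 * Lprim ((PI - C) / 2) - Lprim C) with (h C).
  destruct (Rtotal_order C (PI / 2)) as [Hlt|[Heq|Hgt]].
  - assert (h C < h (PI / 2)); [|split; lra].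
    apply (strict_incr_of_derive_pos h dh C (PI / 2) Hlt).
    + intros x Hx. apply Hd. lra.
    + intros x Hx. apply Hc. lra.
    + intros x Hx. apply (log2sin_central_sign x ltac:(lra)). lra.
  - rewrite Heq. split; [lra|reflexivity].
  - assert (h C < h (PI / 2)); [|split; lra].
    apply (strict_decr_of_derive_neg h dh (PI / 2) C Hgt).
    + intros x Hx. apply Hd. lra.
    + intros x Hx. apply Hc. lra.
    + intros x Hx. apply (log2sin_central_sign x ltac:(lra)). lra.
Qed.

Lemma v8_Lprim : v8 = 8 * (Lprim 0 - Lprim (PI / 4)).
Proof. pose proof PI_RGT_0. unfold v8. rewrite Lob_Lprim by lra. reflexivity. Qed.

Lemma Vfun_max (A B C : R) : 0 <= A -> 0 <= B -> 0 <= C -> A + B + C <= PI ->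
  Vfun A B C <= v8 / 2 /\ (Vfun A B C = v8 / 2 <-> A = PI / 4 /\ B = PI / 4 /\ C = PI / 2).
Proof.
  intros HA HB HC HS. pose proof PI_RGT_0.
  destruct (Lprim_increment_le A C HC HA ltac:(lra)) as [WA WAe].
  destruct (Lprim_increment_le B C HC HB ltac:(lra)) as [WB WBe].
  destruct (Lprim_central_le C ltac:(lra)) as [Hh Hhe].
  pose proof Lprim_PI2. rewrite v8_Lprim. unfold Vfun.
  split; [lra|split].
  - intros Heq.
    assert (HC2 : C = PI / 2) by (apply Hhe; lra).
    destruct (WAe ltac:(lra)) as [|HA2]; [lra|].
    destruct (WBe ltac:(lra)) as [|HB2]; [lra|].
    rewrite HC2 in HA2, HB2. repeat split; [rewrite HA2|rewrite HB2|]; (field || assumption).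
  - intros (-> & -> & ->).
    pose proof (Lprim_reflect (PI / 4) ltac:(lra)) as Hr.
    replace (PI - PI / 4) with (PI / 4 + PI / 2) in Hr by field. lra.
Qed.

Theorem lemma4p1
  (M nM lM : nat -> nat) (N0 : nat) (s ns ls : R) :
  0 <= s <= 1 ->
  (forall N, (N0 <= N)%nat ->
     (1 <= M N)%nat /\ (M N <= N)%nat /\
     (1 <= nM N)%nat /\ (nM N <= M N - 1)%nat /\
     (1 <= lM N)%nat /\ (lM N <= M N - 1 - nM N)%nat /\
     (forall n l, (1 <= n)%nat -> (n <= M N - 1)%nat ->
                  (1 <= l)%nat -> (l <= M N - 1 - n)%nat ->
                  cM (M N) n l (tN N) <= cM (M N) (nM N) (lM N) (tN N))) ->
  is_lim_seq (fun N => INR (M N) / (INR N + / 2)) s ->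
  is_lim_seq (fun N => INR (nM N) / (INR N + / 2)) ns ->
  is_lim_seq (fun N => INR (lM N) / (INR N + / 2)) ls ->
  exists L : R,
    is_lim_seq (fun N => / (INR N + / 2) * ln (cM (M N) (nM N) (lM N) (tN N))) L
    /\ L <= v8 / (2 * PI)
    /\ (L = v8 / (2 * PI) <-> (s = 1 /\ ns = 1 / 2 /\ ls = 1 / 4)).
Proof.
  intros Hs Hyp HM Hn Hl. pose proof PI_RGT_0.
  assert (Hev : eventually (fun N =>
            (1 <= lM N)%nat /\ (lM N + nM N <= M N - 1)%nat /\ (M N <= N)%nat)).
  { exists N0. intros N HN. destruct (Hyp N HN) as (? & ? & ? & ? & ? & ? & _). lia. }
  assert (Hns := is_lim_ratio_nonneg nM ns Hn).
  assert (Hls := is_lim_ratio_nonneg lM ls Hl).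
  assert (Hsum : ls + ns <= s).
  { apply (is_lim_ratio_le (fun N => lM N + nM N)%nat M); [|now apply is_lim_ratio_add|exact HM].
    revert Hev. apply filter_imp. lia. }
  destruct (Vfun_max (PI * (s - ls - ns)) (PI * ls) (PI * ns)) as [Hle Heq]; try nra.
  exists (Vfun (PI * (s - ls - ns)) (PI * ls) (PI * ns) / PI). split; [|split].
  - now apply is_lim_ln_cM.
  - replace (v8 / (2 * PI)) with (v8 / 2 / PI) by (field; lra).
    apply Rmult_le_compat_r; [left; apply Rinv_0_lt_compat|]; lra.
  - replace (v8 / (2 * PI)) with (v8 / 2 / PI) by (field; lra).
    split.
    + intros HL. apply (Rmult_eq_compat_r PI) in HL.
      unfold Rdiv in HL. rewrite !Rmult_assoc, Rinv_l, !Rmult_1_r in HL by lra.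
      apply Heq in HL. destruct HL as (HA & HB & HC).
      nra.
    + intros (-> & -> & ->). f_equal. apply Heq. repeat split; field.
Qed.
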